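(* For every integer $n\ge 0$, $$\Phi^{(4)}[aq^n; b; c, c'; x, y] = \sum_{k=0}^n \sum_{i=0}^k \begin{bmatrix} n \\ k \end{bmatrix} \begin{bmatrix} k \\ i \end{bmatrix} \frac{(b; q)_k}{(c; q)_{k-i} (c'; q)_i} q^{2\binom{k}{2}} a^k x^{k-i} y^i\, \Phi^{(4)}[aq^k; bq^k; cq^{k-i}, c'q^i; xq^i, y]$$ and $$\Phi^{(4)}[aq^{-n}; b; c, c'; x, y] = \sum_{k=0}^n \sum_{i=0}^k \begin{bmatrix} n \\ k \end{bmatrix} \begin{bmatrix} k \\ i \end{bmatrix} \frac{(b; q)_k}{(c; q)_{k-i} (c'; q)_i} q^{\binom{k}{2} - nk} (-a)^k x^{k-i} y^i\, \Phi^{(4)}[a; bq^k; cq^{k-i}, c'q^i; xq^i, y].$$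
   Context: Let $q$ be a complex number with $0<|q|<1$. For complex $z$ and integer $m\ge 0$, $(z;q)_m=\prod_{j=0}^{m-1}(1-zq^j)$, with $(z;q)_0=1$. For integers $0\le k\le n$, $\begin{bmatrix} n \\ k \end{bmatrix}=\frac{(q;q)_n}{(q;q)_k(q;q)_{n-k}}$ is the $q$-binomial coefficient. The $q$-Appell function $\Phi^{(4)}$ is $$\Phi^{(4)}[a; b; c, c'; x, y] = \sum_{m, n \geq 0} \frac{(a; q)_{m+n} (b; q)_{m+n}}{(q; q)_m (q; q)_n (c; q)_m (c'; q)_n} x^m y^n.$$ Identities are understood as identities of power series in $x,y$ (formal, or convergent for small $|x|,|y|$), with complex parameters chosen so that no denominator occurring vanishes. *)

From HB Require Import structures.
From mathcomp Require Import all_boot all_order all_algebra.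
From mathcomp Require Import reals.
From mathcomp Require Export complex.
Set Implicit Arguments. Unset Strict Implicit. Unset Printing Implicit Defensive.
Import Order.TTheory GRing.Theory Num.Theory.
Local Open Scope ring_scope.

Section Defs.
Variable (C : fieldType).

Definition qpoch (z q : C) (m : nat) : C := \prod_(j < m) (1 - z * q ^+ j).

Definition qbin (q : C) (n k : nat) : C :=
  qpoch q q n / (qpoch q q k * qpoch q q (n - k)).

(* Formal power series in two variables x, y : [f m n] is the coefficient
   of x^m y^n. *)
Definition fps := nat -> nat -> C.

(* substitution x |-> t * x *)
Definition fps_scalex (t : C) (f : fps) : fps := fun m n => t ^+ m * f m n.

(* multiplication by the monomial x^u y^v *)
Definition fps_mulmon (u v : nat) (f : fps) : fps :=
  fun m n => if (u <= m)%N && (v <= n)%N then f (m - u)%N (n - v)%N else 0.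

Definition Phi4 (q a b c c' : C) : fps := fun m n =>
  qpoch a q (m + n) * qpoch b q (m + n) /
  (qpoch q q m * qpoch q q n * qpoch c q m * qpoch c' q n).
End Defs.

From HB Require Import structures.
From mathcomp Require Import all_boot all_order all_algebra.
From mathcomp Require Import reals complex.
From mathcomp Require Import ring zify.
Import Order.TTheory GRing.Theory Num.Theory.
Local Open Scope ring_scope.

(* The x^M y^N coefficient of Phi4[A; b; c, c'; x, y] contains A only through
   (A;q)_(M+N).  For A = a q^n (resp. a q^-n), induction on n with the q-Pascal
   rule expands (A;q)_s as a q-binomial sum over k of (q^(s-k+1);q)_k times
   (a q^k;q)_(s-k) (resp. (a;q)_(s-k)).  A q-Vandermonde identity then splits
   (q^(M+N-k+1);q)_k into a sum over i, and after cancelling the shifted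
   Pochhammer symbols the (k, i) term is exactly the x^M y^N coefficient of
   x^(k-i) y^i Phi4[...; x q^i, y] in the statement. *)

Section QCalculus.
Context {F : fieldType} {q : F}.

Local Notation qfac := (qpoch q q).

(* [qfall s k] is (q^(s-k+1);q)_k = (q;q)_s / (q;q)_(s-k) for k <= s; for
   k > s the truncated subtraction makes the factor j = s equal to 0. *)
Definition qfall (s k : nat) : F := \prod_(j < k) (1 - q ^+ (s - j)).

Lemma qpoch0 z : qpoch z q 0 = 1.
Proof. by rewrite /qpoch big_ord0. Qed.

Lemma qpoch_recl z s : qpoch z q s.+1 = (1 - z) * qpoch (z * q) q s.
Proof.
rewrite /qpoch big_ord_recl expr0 mulr1; congr (_ * _).
by apply: eq_bigr => j _; rewrite /bump /= exprS mulrA.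
Qed.

Lemma qpoch_recr z s : qpoch z q s.+1 = qpoch z q s * (1 - z * q ^+ s).
Proof. by rewrite /qpoch big_ord_recr. Qed.

Lemma qpochD z m n : qpoch z q (m + n) = qpoch z q m * qpoch (z * q ^+ m) q n.
Proof.
rewrite /qpoch big_split_ord; congr (_ * _).
by apply: eq_bigr => j _; rewrite exprD mulrA.
Qed.

Lemma qpoch_contiguous z s :
  qpoch (z * q) q s.+1 = qpoch z q s.+1 + z * (1 - q ^+ s.+1) * qpoch (z * q) q s.
Proof. by rewrite qpoch_recr qpoch_recl exprS; ring. Qed.

Lemma qfacS k : qfac k.+1 = qfac k * (1 - q ^+ k.+1).
Proof. by rewrite qpoch_recr exprS. Qed.

Lemma qfall0 s : qfall s 0 = 1.
Proof. by rewrite /qfall big_ord0. Qed.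

Lemma qfall_recl s k : qfall s.+1 k.+1 = (1 - q ^+ s.+1) * qfall s k.
Proof. by rewrite /qfall big_ord_recl subn0. Qed.

Lemma qfall_recr s k : qfall s k.+1 = qfall s k * (1 - q ^+ (s - k)).
Proof. by rewrite /qfall big_ord_recr. Qed.

Lemma qfall_eq0 {s k : nat} : (s < k)%N -> qfall s k = 0.
Proof.
by move=> lt_sk; rewrite /qfall (bigD1 (Ordinal lt_sk)) //= subnn subrr mul0r.
Qed.

Lemma qfac_qfall {s k : nat} : (k <= s)%N -> qfac s = qfall s k * qfac (s - k).
Proof.
elim: k => [|k IHk] le_ks; first by rewrite qfall0 mul1r subn0.
rewrite IHk ?(ltnW le_ks) // qfall_recr -mulrA; congr (_ * _).
have -> : (s - k = (s - k.+1).+1)%N by lia.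
by rewrite qpoch_recr mulrC -exprS -subSn // subSS.
Qed.

Lemma qfall_addSS M N k :
  qfall (M.+1 + N.+1) k.+1
  = (1 - q ^+ M.+1) * qfall (M + N.+1) k
    + q ^+ M.+1 * (1 - q ^+ N.+1) * qfall (M.+1 + N) k.
Proof. by rewrite [in LHS]addSn qfall_recl addSnnS -addSn exprD; ring. Qed.

Hypotheses (q_neq0 : q != 0) (qpow_neq1 : forall j, q ^+ j.+1 != 1).

Lemma qpow_neq0 m : q ^+ m != 0.
Proof. exact: expf_neq0. Qed.

Lemma one_sub_qpow_neq0 k : 1 - q ^+ k.+1 != 0.
Proof. by rewrite subr_eq0 eq_sym qpow_neq1. Qed.

Lemma qfac_neq0 k : qfac k != 0.
Proof. by apply/prodf_neq0 => j _; rewrite -exprS one_sub_qpow_neq0. Qed.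

Lemma qfall_neq0 {s k : nat} : (k <= s)%N -> qfall s k != 0.
Proof.
move=> le_ks; apply: contra_neq (qfac_neq0 s) => qfall_s0.
by rewrite (qfac_qfall le_ks) qfall_s0 mul0r.
Qed.

Lemma qbin_qfall {n k : nat} : (k <= n)%N -> qbin q n k = qfall n k / qfac k.
Proof.
move=> le_kn; rewrite /qbin (qfac_qfall le_kn) invfM [_^-1 * _]mulrC mulrA.
by rewrite mulfK ?qfac_neq0.
Qed.

Lemma qpoch_neq0 z m : (forall j, z * q ^+ j != 1) -> qpoch z q m != 0.
Proof. by move=> hz; apply/prodf_neq0 => j _; rewrite subr_eq0 eq_sym hz. Qed.

Lemma qpow_eq_mul_div m1 m2 n1 n2 :
  (m1 + m2 = n1 + n2)%N -> q ^+ m1 = q ^+ n1 * q ^+ n2 / q ^+ m2.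
Proof. by move=> eq_mn; rewrite -exprD -eq_mn exprD mulfK ?qpow_neq0. Qed.

Lemma qfall_pascal n k :
  qfall n.+1 k.+1 = qfall n k.+1 + q ^+ n / q ^+ k * (1 - q ^+ k.+1) * qfall n k.
Proof.
rewrite qfall_recl qfall_recr.
have [le_kn | lt_nk] := leqP k n; last by rewrite qfall_eq0 // !(mulr0, mul0r, addr0).
rewrite (@qpow_eq_mul_div n.+1 0 (n - k) k.+1) ?(@qpow_eq_mul_div n 0 (n - k) k); try lia.
by rewrite !expr0 !divr1 exprS; field; rewrite qpow_neq0.
Qed.

Lemma qfall_pascal_dual n k :
  qfall n.+1 k.+1 = q ^+ k.+1 * qfall n k.+1 + (1 - q ^+ k.+1) * qfall n k.
Proof.
rewrite qfall_recl qfall_recr.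
have [le_kn | lt_nk] := leqP k n; last by rewrite qfall_eq0 // !(mulr0, mul0r, addr0).
by rewrite (@qpow_eq_mul_div n.+1 0 (n - k) k.+1) ?expr0 ?divr1; [ring | lia].
Qed.

Lemma qpoch_qpow_expand n a s :
  qpoch (a * q ^+ n) q s =
  \sum_(k < n.+1) qfall n k * qfall s k / qfac k
     * (q ^+ (2 * 'C(k, 2)) * a ^+ k * qpoch (a * q ^+ k) q (s - k)).
Proof.
elim: n a s => [|n IHn] a s.
  by rewrite big_ord1 !qfall0 qpoch0 !expr0 subn0 invr1 !mulr1 !mul1r.
case: s => [|s].
  rewrite qpoch0 big_ord_recl big1 => [|k _]; last first.
    by rewrite (@qfall_eq0 0 k.+1) // !(mulr0, mul0r).
  by rewrite /= !qfall0 !qpoch0 invr1 !mul1r addr0.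
have -> : a * q ^+ n.+1 = (a * q ^+ n) * q by rewrite exprSr mulrA.
rewrite qpoch_contiguous [a * q ^+ n * q]mulrAC IHn (IHn (a * q)).
rewrite [RHS]big_ord_recl /=; symmetry.
under eq_bigr => k _ do rewrite (_ : bump 0 k = k.+1) // qfall_pascal !mulrDl.
rewrite big_split /= addrA; congr (_ + _).
  rewrite [in RHS]big_ord_recl big_ord_recr /= (@qfall_eq0 n n.+1) //.
  by rewrite !(mulr0, mul0r) addr0 !qfall0.
rewrite mulr_sumr; apply: eq_bigr => k _.
rewrite qfall_recl qfacS subSS.
rewrite (@qpow_eq_mul_div (2 * 'C(k.+1, 2)) 0 (2 * 'C(k, 2)) (k + k)); last first.
  by rewrite binS bin1; lia.
rewrite exprD exprMn expr0 divr1 exprS [a * (q * _)]mulrA (exprS a).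
have := one_sub_qpow_neq0 k; rewrite exprS => nz_k.
by field; rewrite qfac_neq0 nz_k qpow_neq0.
Qed.

Lemma qpoch_qpowV_expand n a s :
  qpoch (a / q ^+ n) q s =
  \sum_(k < n.+1) qfall n k * qfall s k / qfac k
     * (q ^+ 'C(k, 2) / q ^+ (n * k) * (- a) ^+ k * qpoch a q (s - k)).
Proof.
elim: n s => [|n IHn] s.
  by rewrite big_ord1 !qfall0 qpoch0 !expr0 subn0 !invr1 !mulr1 !mul1r.
case: s => [|s].
  rewrite qpoch0 big_ord_recl big1 => [|k _]; last first.
    by rewrite (@qfall_eq0 0 k.+1) // !(mulr0, mul0r).
  by rewrite /= !qfall0 !qpoch0 muln0 !expr0 !invr1 !mulr1 addr0.
have shift : a / q ^+ n = (a / q ^+ n.+1) * q.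
  by rewrite exprS; field; rewrite q_neq0 qpow_neq0.
have -> : qpoch (a / q ^+ n.+1) q s.+1 =
    qpoch (a / q ^+ n) q s.+1 - a / q ^+ n.+1 * (1 - q ^+ s.+1) * qpoch (a / q ^+ n) q s.
  by rewrite shift qpoch_contiguous addrK.
rewrite !IHn [RHS]big_ord_recl /=; symmetry.
under eq_bigr => k _ do rewrite (_ : bump 0 k = k.+1) // qfall_pascal_dual !mulrDl.
rewrite big_split /= addrA; congr (_ + _).
  rewrite [in RHS]big_ord_recl big_ord_recr /= (@qfall_eq0 n n.+1) //.
  rewrite !(mulr0, mul0r) addr0 !qfall0 !muln0; congr (_ + _).
  apply: eq_bigr => k _; rewrite (_ : bump 0 k = k.+1) // mulSn exprD.
  by field; rewrite !qpow_neq0 qfac_neq0.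
rewrite mulr_sumr -sumrN; apply: eq_bigr => k _.
rewrite qfall_recl qfacS subSS binS bin1 exprD (exprS (- a)) mulSn mulnS !exprD (exprS q n).
have := one_sub_qpow_neq0 k; rewrite exprS => nz_k.
by rewrite !exprS; field; rewrite nz_k qfac_neq0 q_neq0 !qpow_neq0.
Qed.

Lemma qfallD k M N :
  qfall (M + N) k =
  \sum_(i < k.+1) qfall k i / qfac i * (q ^+ (i * (M + i)) / q ^+ (i * k))
     * qfall M (k - i) * qfall N i.
Proof.
elim: k M N => [|k IHk] M N.
  by rewrite big_ord1 !qfall0 qpoch0 !mul0n !expr0 invr1 !mulr1.
case: M => [|M].
  rewrite big_ord_recr /= big1 => [|i _]; last first.
    by rewrite (@qfall_eq0 0 (k.+1 - i)) ?subn_gt0 // !(mulr0, mul0r).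
  rewrite (qfac_qfall (leqnn k.+1)) subnn qfall0 qpoch0 add0r add0n.
  by field; rewrite qpow_neq0 qfall_neq0.
case: N => [|N].
  rewrite big_ord_recl big1 => [|i _]; last first.
    by rewrite /= (@qfall_eq0 0 i.+1) // !(mulr0, mul0r).
  by rewrite /= !qfall0 qpoch0 !mul0n !expr0 invr1 !mulr1 subn0 addn0 addr0 mul1r.
rewrite qfall_addSS IHk IHk; symmetry; rewrite big_ord_recl /=.
under eq_bigr => i _ do rewrite (_ : bump 0 i = i.+1) // qfall_pascal !mulrDl.
rewrite big_split /= addrA; congr (_ + _).
  rewrite mulr_sumr [in RHS]big_ord_recl big_ord_recr /= (@qfall_eq0 k k.+1) //.
  rewrite !(mulr0, mul0r) addr0; congr (_ + _).
    by rewrite !qfall0 qpoch0 !mul0n !expr0 !subn0 qfall_recl invr1; ring.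
  apply: eq_bigr => i _; rewrite (_ : bump 0 i = i.+1) // subSS.
  have -> : (k - i = (k - i.+1).+1)%N by have := ltn_ord i; lia.
  rewrite qfall_recl (_ : (i.+1 * (M.+1 + i.+1) = i.+1 * (M + i.+1) + i.+1)%N); last by ring.
  rewrite (_ : (i.+1 * k.+1 = i.+1 * k + i.+1)%N); last by ring.
  by rewrite !exprD; field; rewrite !qpow_neq0 qfac_neq0.
rewrite mulr_sumr; apply: eq_bigr => i _.
rewrite qfall_recl qfacS subSS.
rewrite (@qpow_eq_mul_div (i.+1 * (M.+1 + i.+1)) (k + i * k)
  (i * (M.+1 + i) + M.+1 + i) (i.+1 * k.+1)); last by ring.
have := one_sub_qpow_neq0 i => nz_i.
by rewrite !exprD; field; rewrite nz_i qfac_neq0 !qpow_neq0.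
Qed.

Context {b c c' : F}.
Hypotheses (c_qpow_neq1 : forall j, c * q ^+ j != 1)
           (c'_qpow_neq1 : forall j, c' * q ^+ j != 1).

Lemma Phi4_shift_coef A M N {k i : nat} : (i <= k)%N ->
  qbin q k i * qpoch b q k / (qpoch c q (k - i) * qpoch c' q i)
  * fps_mulmon (k - i) i (fps_scalex (q ^+ i)
      (Phi4 q A (b * q ^+ k) (c * q ^+ (k - i)) (c' * q ^+ i))) M N
  = qfall k i / qfac i * (q ^+ (i * (M + i)) / q ^+ (i * k))
      * qfall M (k - i) * qfall N i
      * (qpoch A q (M + N - k)
         * (qpoch b q (M + N) / (qfac M * qfac N * qpoch c q M * qpoch c' q N))).
Proof.
move=> le_ik; rewrite /fps_mulmon /fps_scalex /Phi4 (qbin_qfall le_ik).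
case: ifP => [/andP [le_kiM le_iN] | /negbT]; last first.
  by rewrite negb_and -!ltnNge => /orP [] /qfall_eq0 ->; rewrite !(mulr0, mul0r).
rewrite -exprM (qfac_qfall le_kiM) (qfac_qfall le_iN).
rewrite -[in qpoch c q M](subnKC le_kiM) -[in qpoch c' q N](subnKC le_iN).
have split_MN : (M + N = k + (M - (k - i) + (N - i)))%N by lia.
rewrite (qpochD c) (qpochD c') split_MN addKn (qpochD b).
rewrite (_ : (M + i = (M - (k - i)) + k)%N); last by lia.
rewrite mulnDr exprD; field.
by rewrite !qfall_neq0 // !qfac_neq0 qpow_neq0 !qpoch_neq0 // => j; rewrite -mulrA -exprD.
Qed.

Lemma Phi4_expand {n : nat} {A : F} {A' w : nat -> F} :
  (forall s, qpoch A q s = \sum_(k < n.+1)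
     qfall n k * qfall s k / qfac k * (w k * qpoch (A' k) q (s - k))) ->
  forall M N, Phi4 q A b c c' M N =
  \sum_(k < n.+1) \sum_(i < k.+1)
    (qbin q n k * qbin q k i * qpoch b q k / (qpoch c q (k - i) * qpoch c' q i) * w k)
    * fps_mulmon (k - i) i (fps_scalex (q ^+ i)
        (Phi4 q (A' k) (b * q ^+ k) (c * q ^+ (k - i)) (c' * q ^+ i))) M N.
Proof.
move=> expandA M N; rewrite {1}/Phi4 -mulrA expandA mulr_suml.
apply: eq_bigr => k _; rewrite qfallD mulr_sumr !mulr_suml.
apply: eq_bigr => i _.
have le_kn : (k <= n)%N by rewrite -ltnS ltn_ord.
have le_ik : (i <= k)%N by rewrite -ltnS ltn_ord.
set f := fps_mulmon _ _ _ M N.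
transitivity (qfall n k / qfac k * w k *
  (qbin q k i * qpoch b q k / (qpoch c q (k - i) * qpoch c' q i) * f)).
  by rewrite /f (Phi4_shift_coef _ _ _ le_ik); ring.
by rewrite (qbin_qfall le_kn); ring.
Qed.

End QCalculus.

Local Open Scope complex_scope.

Theorem theorem15 (R : realType) (q a b c c' : R[i])
  (hq0 : 0 < `|q|) (hq1 : `|q| < 1)
  (hc : forall j : nat, c * q ^+ j != 1)
  (hc' : forall j : nat, c' * q ^+ j != 1) :
  forall n : nat,
  (forall M N : nat,
    Phi4 q (a * q ^+ n) b c c' M N =
    \sum_(k < n.+1) \sum_(i < k.+1)
      (qbin q n k * qbin q k i * qpoch b q k
        / (qpoch c q (k - i) * qpoch c' q i)
        * q ^+ (2 * 'C(k, 2)) * a ^+ k)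
      * fps_mulmon (k - i) i
          (fps_scalex (q ^+ i)
             (Phi4 q (a * q ^+ k) (b * q ^+ k) (c * q ^+ (k - i)) (c' * q ^+ i)))
          M N)
  /\
  (forall M N : nat,
    Phi4 q (a * q ^- n) b c c' M N =
    \sum_(k < n.+1) \sum_(i < k.+1)
      (qbin q n k * qbin q k i * qpoch b q k
        / (qpoch c q (k - i) * qpoch c' q i)
        * (q ^+ 'C(k, 2) * q ^- (n * k)) * (- a) ^+ k)
      * fps_mulmon (k - i) i
          (fps_scalex (q ^+ i)
             (Phi4 q a (b * q ^+ k) (c * q ^+ (k - i)) (c' * q ^+ i)))
          M N).
Proof.
have q_neq0 : q != 0 by rewrite -normr_gt0.
have qpow_neq1 j : q ^+ j.+1 != 1.
  apply/eqP => qpow_eq1.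
  have : `|q ^+ j.+1| < 1 by rewrite normrX exprn_ilt1.
  by rewrite qpow_eq1 normr1 ltxx.
move=> n; split=> M N.
- rewrite (Phi4_expand (A' := fun k => a * q ^+ k)
    (w := fun k => q ^+ (2 * 'C(k, 2)) * a ^+ k) q_neq0 qpow_neq1 hc hc'
    (qpoch_qpow_expand q_neq0 qpow_neq1 n a)).
  by apply: eq_bigr => k _; apply: eq_bigr => i _; rewrite mulrA.
- rewrite (Phi4_expand (A' := fun=> a)
    (w := fun k => q ^+ 'C(k, 2) / q ^+ (n * k) * (- a) ^+ k) q_neq0 qpow_neq1 hc hc'
    (qpoch_qpowV_expand q_neq0 qpow_neq1 n a)).
  by apply: eq_bigr => k _; apply: eq_bigr => i _; rewrite mulrA.
Qed.
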